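(* Let $U\colon\mathcal{E}\to\mathbf{Set}$ be a topological category and $\overline T\colon\mathcal{E}\to\mathcal{E}$ a lifting of a monad $T\colon\mathbf{Set}\to\mathbf{Set}$. Let $a\colon\overline TA\to A$ be a $\overline T$-algebra and $P\in\mathcal{E}$. Then there is at most one algebra structure $p\colon\overline TP\to P$ such that $(P,p)$ is a refinement of $(A,a)$.
   Context: Topological category: $U$ such that every family of maps $(f_i\colon Y\to UA_i)$ has a unique $U$-initial lift. Fibre $\mathcal{E}_Y$: objects $P$ with $UP=Y$, ordered by $P\sqsubseteq P'$ iff there is an $\mathcal{E}$-morphism $P\to P'$ over $\mathit{id}_Y$. $\overline T$ is a lifting of $T$: a monad on $\mathcal{E}$ with $U\overline T=TU$ whose unit and multiplication lie over those of $T$. A $\overline T$-algebra $(P,p)$ is a refinement of a $\overline T$-algebra $(A,a)$ if $P\in\mathcal{E}_{UA}$, $A\sqsubseteq P$, and the unique morphism $\iota_{A,P}\colon A\to P$ with $U\iota_{A,P}=\mathit{id}_{UA}$ is an algebra homomorphism. *)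

Set Implicit Arguments.
Unset Strict Implicit.

Definition cast {X Y : Type} (e : X = Y) (x : X) : Y :=
  match e in _ = Z return Z with eq_refl => x end.

Record Category := {
  ob :> Type;
  hom : ob -> ob -> Type;
  idm : forall A, hom A A;
  comp : forall A B C, hom B C -> hom A B -> hom A C;
  comp_id_l : forall A B (f : hom A B), comp (idm B) f = f;
  comp_id_r : forall A B (f : hom A B), comp f (idm A) = f;
  comp_assoc : forall A B C D (f : hom A B) (g : hom B C) (h : hom C D),
      comp h (comp g f) = comp (comp h g) f
}.

Arguments idm {E} A : rename.
Arguments comp {E A B C} : rename.

Record SetFunctor (E : Category) := {
  Fob : E -> Type;
  Fmap : forall A B : E, hom A B -> Fob A -> Fob B;
  Fmap_id : forall (A : E) x, Fmap (idm A) x = x;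
  Fmap_comp : forall (A B C : E) (f : hom A B) (g : hom B C) x,
      Fmap (comp g f) x = Fmap g (Fmap f x)
}.

Arguments Fmap {E} U {A B} : rename.

Definition faithful (E : Category) (U : SetFunctor E) : Prop :=
  forall (A B : E) (f g : hom A B), (forall x, Fmap U f x = Fmap U g x) -> f = g.

(* A U-initial lift of the U-structured source (f_i : Y -> U A_i)_{i in I}:
   an object P with an identification e : UP = Y and morphisms
   fb_i : P -> A_i with U fb_i = f_i (after transport along e), such that for
   every source (h_i : B -> A_i) and every map g : UB -> Y with
   U h_i = f_i o g there is a unique h : B -> P with U h = g (after
   transport) and fb_i o h = h_i. *)
Definition initial_lift (E : Category) (U : SetFunctor E) (Y : Type)
    (I : Type) (A : I -> E) (f : forall i, Y -> Fob U (A i))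
    (L : { P : E & { e : Fob U P = Y & forall i, hom P (A i) } }) : Prop :=
  let P := projT1 L in
  let e := projT1 (projT2 L) in
  let fb := projT2 (projT2 L) in
  (forall i x, Fmap U (fb i) x = f i (cast e x)) /\
  (forall (B : E) (g : Fob U B -> Y) (h : forall i, hom B (A i)),
      (forall i x, Fmap U (h i) x = f i (g x)) ->
      exists! k : hom B P,
        (forall x, cast e (Fmap U k x) = g x) /\ (forall i, comp (fb i) k = h i)).

(* Topological category (concrete, i.e. U faithful, as in Adamek--Herrlich--
   Strecker): every U-structured source has a unique U-initial lift. *)
Definition topological (E : Category) (U : SetFunctor E) : Prop :=
  @faithful E U /\
  forall (Y : Type) (I : Type) (A : I -> E) (f : forall i, Y -> Fob U (A i)),
    exists! L, @initial_lift E U Y I A f L.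

Record SetMonad := {
  Tob : Type -> Type;
  Tmap : forall X Y : Type, (X -> Y) -> Tob X -> Tob Y;
  Tmap_id : forall X (t : Tob X), Tmap (fun x => x) t = t;
  Tmap_comp : forall X Y Z (f : X -> Y) (g : Y -> Z) t,
      Tmap (fun x => g (f x)) t = Tmap g (Tmap f t);
  Teta : forall X, X -> Tob X;
  Tmu : forall X, Tob (Tob X) -> Tob X;
  Teta_nat : forall X Y (f : X -> Y) x, Tmap f (Teta x) = Teta (f x);
  Tmu_nat : forall X Y (f : X -> Y) t, Tmap f (Tmu t) = Tmu (Tmap (Tmap f) t);
  Tmu_eta_l : forall X (t : Tob X), Tmu (Teta t) = t;
  Tmu_eta_r : forall X (t : Tob X), Tmu (Tmap (@Teta X) t) = t;
  Tmu_assoc : forall X (t : Tob (Tob (Tob X))),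
      Tmu (Tmu t) = Tmu (Tmap (@Tmu X) t)
}.

Arguments Tmap {T X Y} : rename.
Arguments Teta {T X} : rename.
Arguments Tmu {T X} : rename.

Record EMonad (E : Category) := {
  Mob : E -> E;
  Mmap : forall A B : E, hom A B -> hom (Mob A) (Mob B);
  Mmap_id : forall A : E, Mmap (idm A) = idm (Mob A);
  Mmap_comp : forall (A B C : E) (f : hom A B) (g : hom B C),
      Mmap (comp g f) = comp (Mmap g) (Mmap f);
  Munit : forall A : E, hom A (Mob A);
  Mmult : forall A : E, hom (Mob (Mob A)) (Mob A);
  Munit_nat : forall (A B : E) (f : hom A B),
      comp (Mmap f) (Munit A) = comp (Munit B) f;
  Mmult_nat : forall (A B : E) (f : hom A B),
      comp (Mmap f) (Mmult A) = comp (Mmult B) (Mmap (Mmap f));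
  Mmult_unit_l : forall A : E, comp (Mmult A) (Munit (Mob A)) = idm (Mob A);
  Mmult_unit_r : forall A : E, comp (Mmult A) (Mmap (Munit A)) = idm (Mob A);
  Mmult_assoc : forall A : E,
      comp (Mmult A) (Mmult (Mob A)) = comp (Mmult A) (Mmap (Mmult A))
}.

Arguments Mmap {E} M {A B} : rename.
Arguments Munit {E} M A : rename.
Arguments Mmult {E} M A : rename.

(* Tb is a lifting of T along U: U o Tb = T o U (on objects and morphisms),
   and the unit and multiplication of Tb lie over those of T. *)
Definition lifting (E : Category) (U : SetFunctor E) (T : SetMonad)
    (Tb : EMonad E) : Prop :=
  exists lob : forall A : E, Fob U (Mob Tb A) = Tob T (Fob U A),
    (forall (A B : E) (f : hom A B) (x : Fob U (Mob Tb A)),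
        cast (lob B) (Fmap U (Mmap Tb f) x) = Tmap (Fmap U f) (cast (lob A) x)) /\
    (forall (A : E) (x : Fob U A),
        cast (lob A) (Fmap U (Munit Tb A) x) = Teta x) /\
    (forall (A : E) (x : Fob U (Mob Tb (Mob Tb A))),
        cast (lob A) (Fmap U (Mmult Tb A) x)
        = Tmu (Tmap (cast (lob A)) (cast (lob (Mob Tb A)) x))).

Definition is_algebra (E : Category) (M : EMonad E) (A : E)
    (a : hom (Mob M A) A) : Prop :=
  comp a (Munit M A) = idm A /\ comp a (Mmap M a) = comp a (Mmult M A).

Definition is_alg_hom (E : Category) (M : EMonad E) (A B : E)
    (a : hom (Mob M A) A) (b : hom (Mob M B) B) (h : hom A B) : Prop :=
  comp h a = comp b (Mmap M h).

Definition over_id (E : Category) (U : SetFunctor E) (A P : E)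
    (e : Fob U A = Fob U P) (h : hom A P) : Prop :=
  forall x, Fmap U h x = cast e x.

Definition fibre_le (E : Category) (U : SetFunctor E) (P P' : E) : Prop :=
  exists e : Fob U P = Fob U P', exists h : hom P P', @over_id E U P P' e h.

(* (P,p) is a refinement of (A,a): P in E_{UA}, A ⊑ P, and the (unique)
   morphism iota : A -> P over id_{UA} is an algebra homomorphism. *)
Definition refinement (E : Category) (U : SetFunctor E) (M : EMonad E)
    (A : E) (a : hom (Mob M A) A) (P : E) (p : hom (Mob M P) P) : Prop :=
  exists e : Fob U P = Fob U A,
    @fibre_le E U A P /\
    forall iota : hom A P, @over_id E U A P (eq_sym e) iota -> @is_alg_hom E M A P a p iota.

(* The comparison morphism iota : A -> P lies over the identity, so the
   underlying map of Tb iota is T applied to the identity of UA, hence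
   surjective; as U is faithful, Tb iota is epi.  If p and q both make iota an
   algebra homomorphism, then p o Tb iota = iota o a = q o Tb iota, so p = q. *)

From Stdlib Require Import ProofIrrelevance FunctionalExtensionality.

Set Implicit Arguments.
Unset Strict Implicit.

Lemma cast_sym_r (X Y : Type) (e : X = Y) (y : Y) : cast e (cast (eq_sym e) y) = y.
Proof. destruct e; reflexivity. Qed.

Lemma cast_inj (X Y : Type) (e : X = Y) (x y : X) : cast e x = cast e y -> x = y.
Proof. destruct e; trivial. Qed.

Lemma Tmap_split_epi (T : SetMonad) (X Y : Type) (f : X -> Y) (s : Y -> X) :
  (forall y, f (s y) = y) -> forall t, @Tmap T _ _ f (Tmap s t) = t.
Proof.
  intros fs t.
  rewrite <- Tmap_comp.
  replace (fun y => f (s y)) with (fun y : Y => y) by (extensionality y; auto).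
  apply Tmap_id.
Qed.

Lemma lifting_split_epi (E : Category) (U : SetFunctor E) (T : SetMonad)
    (Tb : EMonad E) (A B : E) (h : hom A B) (s : Fob U B -> Fob U A) :
  @lifting E U T Tb -> (forall y, Fmap U h (s y) = y) ->
  exists s' : Fob U (Mob Tb B) -> Fob U (Mob Tb A),
    forall y, Fmap U (Mmap Tb h) (s' y) = y.
Proof.
  intros [lob [lob_map _]] hs.
  exists (fun y => cast (eq_sym (lob A)) (Tmap s (cast (lob B) y))).
  intro y; apply (@cast_inj _ _ (lob B)).
  rewrite lob_map, cast_sym_r.
  now apply Tmap_split_epi.
Qed.

Lemma faithful_surj_epi (E : Category) (U : SetFunctor E) (A B C : E)
    (h : hom A B) (f g : hom B C) :
  @faithful E U -> (forall y, exists x, Fmap U h x = y) ->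
  comp f h = comp g h -> f = g.
Proof.
  intros U_faithful h_surj fh_gh.
  apply U_faithful; intro y.
  destruct (h_surj y) as [x <-].
  now rewrite <- !Fmap_comp, fh_gh.
Qed.

Lemma over_id_split_epi (E : Category) (U : SetFunctor E) (A P : E)
    (e : Fob U A = Fob U P) (h : hom A P) :
  @over_id E U A P e h -> forall y, Fmap U h (cast (eq_sym e) y) = y.
Proof. intros h_over y; now rewrite h_over, cast_sym_r. Qed.

Lemma refinement_alg_hom (E : Category) (U : SetFunctor E) (M : EMonad E)
    (A : E) (a : hom (Mob M A) A) (P : E) (p : hom (Mob M P) P)
    (e : Fob U A = Fob U P) (iota : hom A P) :
  @refinement E U M A a P p -> @over_id E U A P e iota ->
  @is_alg_hom E M A P a p iota.
Proof.
  intros [e' [_ iota_hom]] iota_over.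
  apply iota_hom.
  now rewrite (proof_irrelevance _ (eq_sym e') e).
Qed.

Theorem lemma1 (E : Category) (U : SetFunctor E) (HU : @topological E U)
    (T : SetMonad) (Tb : EMonad E) (HL : @lifting E U T Tb)
    (A : E) (a : hom (Mob Tb A) A) (Ha : @is_algebra E Tb A a) (P : E)
    (p q : hom (Mob Tb P) P) :
  @is_algebra E Tb P p -> @refinement E U Tb A a P p ->
  @is_algebra E Tb P q -> @refinement E U Tb A a P q ->
  p = q.
Proof.
  intros _ p_ref _ q_ref.
  pose proof p_ref as [_ [[e [iota iota_over]] _]].
  pose proof (refinement_alg_hom p_ref iota_over) as p_hom.
  pose proof (refinement_alg_hom q_ref iota_over) as q_hom.
  destruct (lifting_split_epi HL (over_id_split_epi iota_over)) as [s Ts].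
  apply (faithful_surj_epi (h := Mmap Tb iota) (proj1 HU)).
  - intro y; now exists (s y).
  - unfold is_alg_hom in p_hom, q_hom; congruence.
Qed.
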